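(* For every $X\in\mathfrak g$, with $x^{(-1)}_N$ denoting the coefficient of $\lambda^{-1}E_{N,1}$ (i.e. of $\lambda^{-1}E_{N,N+1}$) in $X$, ${\rm A}_2(\mathcal FX)+{\rm S}^*(X\mathcal F)=\mathcal F\,{\rm R}(X)-2\alpha x_N^{(-1)}I$ and ${\rm A}_1(X\mathcal F)+{\rm S}(\mathcal FX)={\rm R}(X)\,\mathcal F-2\alpha x_N^{(-1)}I$.
   Context: Periodic lattice setting: $N\ge2$; $\mathfrak g=\{X(\lambda)\in gl(N)[\lambda,\lambda^{-1}]:\Omega X(\lambda)\Omega^{-1}=X(\omega\lambda)\}$, $\omega=e^{2\pi i/N}$, $\Omega=\mathrm{diag}(1,\omega,\dots,\omega^{N-1})$, matrix indices modulo $N$. $\mathfrak g_p$ = elements $\lambda^p\sum_{j-k\equiv p\,(\mathrm{mod}\,N)}x_{jk}E_{jk}$; $P_0,P_{>0},P_{\ge0},P_{<0}$ the projections onto $\mathfrak g_0$, $\oplus_{p>0}\mathfrak g_p$, $\oplus_{p\ge0}\mathfrak g_p$, $\oplus_{p<0}\mathfrak g_p$. ${\rm R}=P_{\ge0}-P_{<0}$, ${\rm R}_0=P_{>0}-P_{<0}$. $W$ is linear with $W=W\circ P_0$ and $W(E_{kk})=\sum_{j=1}^N\mathrm{sgn}(k-j)E_{jj}$. ${\rm A}_1={\rm R}_0+W$, ${\rm A}_2={\rm R}_0-W$, ${\rm S}=P_0-W$, ${\rm S}^*=P_0+W$. $\alpha$ real, $\mathcal F=I-\alpha\lambda\sum_{k=1}^NE_{k+1,k}$.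 *)

From HB Require Import structures.
From mathcomp Require Import all_boot all_order all_algebra all_field.
Set Implicit Arguments. Unset Strict Implicit. Unset Printing Implicit Defensive.
Import Order.TTheory GRing.Theory Num.Theory.
Local Open Scope ring_scope.

(* Matrix-valued Laurent polynomials in lambda: coefficient of lambda^p is
   lcoef p; finitely supported (support in [-lbound, lbound]).
   Matrix indices are 0-based: paper index k (1..N) is k-1 here. *)
Record loopM (N : nat) := Loop {
  lcoef :> int -> 'M[algC]_N;
  lbound : nat;
  lbounded : forall p : int, (lbound < `|p|)%N -> lcoef p = 0 }.

(* Laurent product X * Y (X : loop polynomial, Y arbitrary coefficient family):
   (X Y)_p = sum_q X_q Y_(p-q), the sum ranging over the support of X. *)
Definition lmulL N (X : loopM N) (Y : int -> 'M[algC]_N) : int -> 'M[algC]_N :=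
  fun p => \sum_(i < (2 * lbound X).+1)
             X (i%:Z - (lbound X)%:Z) *m Y (p - (i%:Z - (lbound X)%:Z)).
Definition lmulR N (Y : int -> 'M[algC]_N) (X : loopM N) : int -> 'M[algC]_N :=
  fun p => \sum_(i < (2 * lbound X).+1)
             Y (p - (i%:Z - (lbound X)%:Z)) *m X (i%:Z - (lbound X)%:Z).

Definition ladd N (f g : int -> 'M[algC]_N) : int -> 'M[algC]_N := fun p => f p + g p.
Definition lsub N (f g : int -> 'M[algC]_N) : int -> 'M[algC]_N := fun p => f p - g p.
Definition lscale N (a : algC) (f : int -> 'M[algC]_N) : int -> 'M[algC]_N :=
  fun p => a *: f p.

(* This is the graded description of Omega X(l) Omega^-1 = X(w l). *)
Definition in_g N (X : loopM N) : Prop :=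
  forall (p : int) (j k : 'I_N),
    ~~ (N%:Z %| (j%:Z - k%:Z - p))%Z -> X p j k = 0.

Definition P0 N (X : int -> 'M[algC]_N) : int -> 'M[algC]_N :=
  fun p => if p == 0 then X p else 0.
Definition Ppos N (X : int -> 'M[algC]_N) : int -> 'M[algC]_N :=
  fun p => if 0 < p then X p else 0.
Definition Pnneg N (X : int -> 'M[algC]_N) : int -> 'M[algC]_N :=
  fun p => if 0 <= p then X p else 0.
Definition Pneg N (X : int -> 'M[algC]_N) : int -> 'M[algC]_N :=
  fun p => if p < 0 then X p else 0.

(* W = W o P0, W(E_kk) = sum_j sgn(k-j) E_jj (extended linearly; elements of
   g_0 are diagonal constant matrices). *)
Definition Wop N (X : int -> 'M[algC]_N) : int -> 'M[algC]_N :=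
  fun p => if p == 0 then
     \matrix_(i, j) ((i == j)%:R *
        \sum_(k < N) (sgz (k%:Z - j%:Z))%:~R * X 0 k k)
   else 0.

Definition Rop N X := lsub (@Pnneg N X) (Pneg X).
Definition R0op N X := lsub (@Ppos N X) (Pneg X).
Definition A1op N X := ladd (@R0op N X) (Wop X).
Definition A2op N X := lsub (@R0op N X) (Wop X).
Definition Sop N X := lsub (@P0 N X) (Wop X).
Definition Sstarop N X := ladd (@P0 N X) (Wop X).

Definition lid N : int -> 'M[algC]_N := fun p => if p == 0 then 1%:M else 0.

(* Cyclic shift sum_{k=1}^N E_{k+1,k}, indices mod N (0-based: (k+1 mod N, k)). *)
Definition shiftL N : 'M[algC]_N :=
  \matrix_(i, j) ((i : nat) == (j.+1 %% N)%N)%:R.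

Definition Fcoef N (alpha : algC) : int -> 'M[algC]_N :=
  fun p => if p == 0 then 1%:M else if p == 1 then - alpha *: shiftL N else 0.

Lemma Fcoef_bounded N alpha :
  forall p : int, (1 < `|p|)%N -> @Fcoef N alpha p = 0.
Proof.
move=> p hp; rewrite /Fcoef.
have -> : (p == 0) = false by apply/negbTE; apply: contraTneq hp => ->.
have -> : (p == 1) = false by apply/negbTE; apply: contraTneq hp => ->.
by [].
Qed.

Definition Floop N (alpha : algC) : loopM N := Loop (@Fcoef_bounded N alpha).

From mathcomp Require Import all_boot all_order all_algebra all_field.
From mathcomp Require Import zify ring.
From Stdlib Require Import FunctionalExtensionality.
Set Implicit Arguments.
Unset Strict Implicit.
Unset Printing Implicit Defensive.
Import Order.TTheory GRing.Theory Num.Theory.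
Local Open Scope ring_scope.

(* Multiplication by F = I - alpha lambda S (S the cyclic shift) mixes only
   neighbouring degrees, so in every degree p <> 0 both identities reduce to
   the definitions of the projections; only the constant term involves W.
   There W sees the diagonal of the degree-0 part of XF - FX, namely
   alpha (S X_(-1) - X_(-1) S).  As X lies in g, X_(-1) is supported on the
   entries (k, k+1); writing b_k for them, S X_(-1) and X_(-1) S are diagonal
   with entries b_(k-1) and b_k, and sum_k sgn(k-j) (b_(k-1) - b_k) telescopes
   to b_j + b_(j-1) - 2 b_N, which produces the term -2 alpha x_N^(-1) I. *)

Lemma lmulL_Floop N a (Y : int -> 'M[algC]_N) p :
  lmulL (Floop N a) Y p = Y p - a *: (shiftL N *m Y (p - 1)).
Proof.
rewrite /lmulL /= !big_ord_recr big_ord0 /= /Fcoef /=.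
by rewrite !subr0 mul1mx mul0mx !add0r -scalemxAl scaleNr addrC.
Qed.

Lemma lmulR_Floop N a (Y : int -> 'M[algC]_N) p :
  lmulR Y (Floop N a) p = Y p - a *: (Y (p - 1) *m shiftL N).
Proof.
rewrite /lmulR /= !big_ord_recr big_ord0 /= /Fcoef /=.
by rewrite !subr0 mulmx1 mulmx0 !add0r -scalemxAr scaleNr addrC.
Qed.

Lemma shiftLE N (i k : 'I_N) : shiftL N i k = (i == ordS k)%:R.
Proof. by rewrite mxE. Qed.

Lemma shiftL_mulmx N (M : 'M[algC]_N) i j : (shiftL N *m M) i j = M (ord_pred i) j.
Proof.
rewrite mxE (bigD1 (ord_pred i)) //= big1 => [|k hk].
  by rewrite shiftLE ord_predK eqxx mul1r addr0.
rewrite shiftLE; case: eqP => [hi|]; last by rewrite mul0r.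
by case/eqP: hk; rewrite hi ordSK.
Qed.

Lemma mulmx_shiftL N (M : 'M[algC]_N) i j : (M *m shiftL N) i j = M i (ordS j).
Proof.
rewrite mxE (bigD1 (ordS j)) //= big1 => [|k hk].
  by rewrite shiftLE eqxx mulr1 addr0.
by rewrite shiftLE (negbTE hk) mulr0.
Qed.

Lemma in_g_coefN1_eq0 N (X : loopM N) (i j : 'I_N) :
  in_g X -> j != ordS i -> X (-1) i j = 0.
Proof.
move=> hX hj; apply: hX; apply: contra hj => hdvd; apply/eqP/val_inj => /=.
have : (i.+1 == j %[mod N])%Z.
  by rewrite eqz_mod_dvd; congr (_ %| _)%Z: hdvd; rewrite -addn1 PoszD; ring.
by rewrite !modz_nat eqz_nat (modn_small (ltn_ord j)) => /eqP.
Qed.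

Lemma telescope_sgz (R : comNzRingType) (c : nat -> R) (n i : nat) : (i <= n)%N ->
  \sum_(0 <= k < n.+1) (sgz (k%:Z - i%:Z))%:~R * (c (if k == 0%N then n else k.-1) - c k)
  = c i + c (if i == 0%N then n else i.-1) - 2 * c n.
Proof.
move=> le_in.
rewrite (@big_cat_nat _ _ _ i) //=; last by lia.
rewrite (@big_ltn _ _ _ i) ?ltnS // subrr sgz0 mul0r add0r.
have -> : \sum_(i.+1 <= k < n.+1) (sgz (k%:Z - i%:Z))%:~R *
     (c (if k == 0%N then n else k.-1) - c k) = c i - c n.
  rewrite (@telescope_sumr_eq _ _ _ (fun k => - c k.-1)) /=; last 2 first.
  - by rewrite ltnS.
  - move=> k /andP[lt_ik lt_kn]; rewrite gtr0_sgz; last by lia.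
    by case: k lt_ik lt_kn => //= k _ _; rewrite mul1r opprK addrC.
  by rewrite opprK addrC.
case: i le_in => [|i] le_in; first by rewrite big_geq //= add0r; ring.
rewrite big_ltn //= (@telescope_sumr_eq _ _ _ (fun k => c k.-1)) /=; last 2 first.
- by [].
- move=> k /andP[lt_0k lt_ki]; rewrite ltr0_sgz; last by lia.
  by case: k lt_0k lt_ki => //= k _ _; rewrite mulN1r opprB.
rewrite ltr0_sgz; last by lia.
by rewrite mulN1r; ring.
Qed.

Lemma telescope_sgz_ord_pred (R : comNzRingType) n (b : 'I_n.+1 -> R) (i : 'I_n.+1) :
  \sum_(k < n.+1) (sgz (k%:Z - i%:Z))%:~R * (b (ord_pred k) - b k)
  = b i + b (ord_pred i) - 2 * b ord_max.
Proof.
pose c m := b (inord m).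
have ord_predE (k : 'I_n.+1) : ord_pred k = inord (if (k : nat) == 0%N then n else k.-1).
  apply: val_inj => /=; case: k => [[|k] lt_kn] /=.
    by rewrite modn_small // inordK.
  by rewrite modnDr !modn_small ?inordK // ltnW.
have -> : ord_max = inord n :> 'I_n.+1 by apply: val_inj; rewrite /= inordK.
pose F k := (sgz (k%:Z - i%:Z))%:~R * (c (if k == 0%N then n else k.-1) - c k).
rewrite (eq_bigr (fun k : 'I_n.+1 => F k)) => [|k _]; last by rewrite /F ord_predE /c inord_val.
rewrite -(big_mkord xpredT F) telescope_sgz; last by rewrite -ltnS.
by rewrite ord_predE /c inord_val.
Qed.

Lemma Wop_neq0 N (Y : int -> 'M[algC]_N) p : p != 0 -> Wop Y p = 0.
Proof. by rewrite /Wop => /negbTE ->. Qed.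

Lemma Wop0E N (Y : int -> 'M[algC]_N) (i j : 'I_N) :
  Wop Y 0 i j = (i == j)%:R * \sum_(k < N) (sgz (k%:Z - j%:Z))%:~R * Y 0 k k.
Proof. by rewrite /Wop eqxx mxE. Qed.

Lemma Wop_lmulR_sub_lmulL_Floop n a (X : loopM n.+1) : in_g X ->
  Wop (lmulR X (Floop n.+1 a)) 0 - Wop (lmulL (Floop n.+1 a) X) 0 =
  a *: (shiftL n.+1 *m X (-1) + X (-1) *m shiftL n.+1)
    - (2 * a * X (-1) ord_max ord0) *: 1%:M.
Proof.
move=> hX; pose b k := X (-1) k (ordS k).
have -> : X (-1) ord_max ord0 = b ord_max.
  by congr (X _ _ _); apply: val_inj; rewrite /= modnn.
have diagE k : lmulR X (Floop n.+1 a) 0 k k - lmulL (Floop n.+1 a) X 0 k k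
               = a * (b (ord_pred k) - b k).
  rewrite lmulR_Floop lmulL_Floop !(shiftL_mulmx, mulmx_shiftL, mxE) sub0r.
  by rewrite /b ord_predK; ring.
apply/matrixP => i j; rewrite !(Wop0E, shiftL_mulmx, mulmx_shiftL, mxE).
have [<-|neq_ij] := eqVneq i j; last first.
  rewrite !mulr0 !mul0r !in_g_coefN1_eq0 ?ord_predK ?(inj_eq (@ordS_inj _)) 1?eq_sym //.
  by rewrite addr0 mulr0 subrr.
rewrite !mul1r mulr1 -sumrB.
under eq_bigr => k _ do rewrite -mulrBr diagE mulrCA.
by rewrite -mulr_sumr telescope_sgz_ord_pred /b ord_predK; ring.
Qed.

Theorem mainTheorem8 (N : nat) (hN : (2 <= N)%N) (alpha : algC)
  (halpha : alpha \is Num.real) (X : loopM N) (hX : in_g X)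
  (iN i1 : 'I_N) (hiN : (iN : nat) = N.-1) (hi1 : (i1 : nat) = 0%N) :
  let F := Floop N alpha in
  let xN := X (-1) iN i1 in
  ladd (A2op (lmulL F X)) (Sstarop (lmulR X F))
    = lsub (lmulL F (Rop X)) (lscale (2 * alpha * xN) (lid N))
  /\
  ladd (A1op (lmulR X F)) (Sop (lmulL F X))
    = lsub (lmulR (Rop X) F) (lscale (2 * alpha * xN) (lid N)).
Proof.
case: N hN X hX iN i1 hiN hi1 => [//|n] _ X hX iN i1 hiN hi1.
have -> : iN = ord_max by apply: val_inj.
have -> : i1 = ord0 by apply: val_inj.
move=> F xN.
have /eqP := Wop_lmulR_sub_lmulL_Floop alpha hX; rewrite subr_eq => /eqP Wdiff.
split; apply: functional_extensionality => p;
  rewrite /A1op /A2op /Sop /Sstarop /R0op /Rop /ladd /lsub /lscale;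
  rewrite /P0 /Ppos /Pnneg /Pneg /lid /F /xN !lmulL_Floop !lmulR_Floop;
  (case: (ltgtP p 0) => [p_lt0|p_gt0|->]; [
    (have p1_lt0 : p - 1 < 0 by lia);
    rewrite !Wop_neq0 ?(lt_eqF p_lt0) // p1_lt0 (lt_geF p1_lt0)
  | (have p1_ge0 : 0 <= p - 1 by lia);
    rewrite !Wop_neq0 ?(gt_eqF p_gt0) // p1_ge0 (le_gtF p1_ge0)
  | rewrite Wdiff sub0r /= ]);
  rewrite ?(scaler0, mulmx0, mul0mx, mulmxBr, mulmxBl);
  by apply/matrixP => i j; rewrite !mxE; ring.
Qed.
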